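(* Let $\mathbb{H}$ be a finite-dimensional complex Hilbert space with $\dim\mathbb{H}\ge2$, let $n\ge2$ and $k\ge1$ be integers, let $|X\rangle\in\mathbb{H}^{\otimes(nk-1)}$ be a known unit vector, let $\tau_1,\dots,\tau_n\in\mathbb{P}_{nk-1}$, let $c_1,\dots,c_n>0$, and let $|\mu\rangle=\sum_{j=1}^n\alpha_j|j\rangle\in\mathbb{C}^n$ be a unit vector. For unit vectors $|\psi_1\rangle,\dots,|\psi_n\rangle\in\mathbb{H}$ and $j=1,\dots,n$ put $|\Psi^j\rangle=\bigotimes_{t=1}^n|\psi_t\rangle^{\otimes k_{jt}}\in\mathbb{H}^{\otimes(nk-1)}$, where $k_{jt}=k$ for $t\ne j$ and $k_{jj}=k-1$. Then there exists a probabilistic quantum transformation $\mathcal{F}_{\tau_1,\dots,\tau_n}$ from $\mathbb{C}^n\otimes\mathbb{H}^{\otimes nk}$ to $\mathbb{H}$, independent of $\mu$ and the $\psi_t$, such that for all unit vectors $|\psi_1\rangle,\dots,|\psi_n\rangle$ with $|\langle X|S_{\tau_j}|\Psi^j\rangle|^2=c_j$ for $j=1,\dots,n$, one has $$\mathcal{F}_{\tau_1,\dots,\tau_n}\Big(\rho_\mu\otimes\bigotimes_{i=1}^n\rho_{\psi_i}^{\otimes k}\Big)=\rho_\varphi,\qquad|\varphi\rangle\propto\sum_{j=1}^n\alpha_je^{i\theta_j}|\psi_j\rangle,\quad e^{i\theta_j}=\frac{\langle X|S_{\tau_j}|\Psi^j\rangle}{|\langle X|S_{\tau_j}|\Psi^j\rangle|}$$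 (the superposition assumed nonzero).
   Context: $\mathbb{P}_{nk-1}$ is the symmetric group on $\{1,\dots,nk-1\}$; for $g\in\mathbb{P}_{nk-1}$, $S_g$ is the unitary on $\mathbb{H}^{\otimes(nk-1)}$ permuting tensor factors according to $g$. For a unit vector $|\psi\rangle$, $\rho_\psi=|\psi\rangle\langle\psi|$; $|\varphi\rangle\propto|\chi\rangle$ means $|\varphi\rangle$ is the normalization of $|\chi\rangle$ up to a global phase. A probabilistic quantum transformation from $\mathbb{H}_1$ to $\mathbb{H}_2$ is a completely positive, trace-non-increasing linear map from operators on $\mathbb{H}_1$ to operators on $\mathbb{H}_2$; $\mathcal{F}(\rho)=\sigma$ for pure states means $\mathcal{F}(\rho)=p\sigma$ for some $p>0$. *)

(* Complex scalars: an arbitrary numClosedFieldType C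
   (algebraically closed field with conjugation and order, e.g. algC or C). *)
From HB Require Import structures.
From mathcomp Require Import all_boot all_order all_algebra.
From mathcomp Require Import fingroup perm.
Set Implicit Arguments. Unset Strict Implicit. Unset Printing Implicit Defensive.
Import Order.TTheory GRing.Theory Num.Theory.
Local Open Scope ring_scope.

Section QDefs.
Variable C : numClosedFieldType.

Definition ket (I : finType) := I -> C.
Definition op (I : finType) := I -> I -> C.

Definition normsq (I : finType) (v : ket I) : C := \sum_i `|v i| ^+ 2.
Definition unit_vec (I : finType) (v : ket I) : Prop := normsq v = 1.
Definition braket (I : finType) (u v : ket I) : C := \sum_i (u i)^* * v i.
Definition rho (I : finType) (v : ket I) : op I := fun i j => v i * (v j)^*.
Definition normalize (I : finType) (v : ket I) : ket I :=
  fun i => v i / sqrtC (normsq v).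

Definition trace (I : finType) (A : op I) : C := \sum_i A i i.
Definition psd (I : finType) (A : op I) : Prop :=
  forall v : ket I, 0 <= \sum_i \sum_j (v i)^* * A i j * v j.

Definition linear_map (I J : finType) (F : op I -> op J) : Prop :=
  forall (a : C) (A B : op I) x y,
    F (fun i i' => a * A i i' + B i i') x y = a * F A x y + F B x y.

(* (F (x) id_m) applied to an operator on I (x) C^m *)
Definition ampl (I J : finType) (F : op I -> op J) (m : nat)
  (A : op (prod I 'I_m)) : op (prod J 'I_m) :=
  fun x y => F (fun i i' => A (i, x.2) (i', y.2)) x.1 y.1.

Definition completely_positive (I J : finType) (F : op I -> op J) : Prop :=
  forall (m : nat) (A : op (prod I 'I_m)), psd A -> psd (ampl F A).

Definition trace_non_increasing (I J : finType) (F : op I -> op J) : Prop :=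
  forall A : op I, psd A -> trace (F A) <= trace A.

Definition prob_qtrans (I J : finType) (F : op I -> op J) : Prop :=
  [/\ linear_map F, completely_positive F & trace_non_increasing F].

(* basis of H^{(x) m}, dim H = d *)
Definition tens (d m : nat) := {ffun 'I_m -> 'I_d}.

Definition Sperm (d m : nat) (g : {perm 'I_m}) (v : ket (tens d m)) : ket (tens d m) :=
  fun f => v [ffun p => f (g p)].

(* access psi_t for a nat index t (t is always < n where used) *)
Definition psi_at (d n : nat) (psi : 'I_n -> ket ('I_d)) (t : nat) : 'I_d -> C :=
  fun a => oapp (fun t' : 'I_n => psi t' a) 0 (insub t).

(* owner of slot p (0-based) in Psi^j = (x)_t psi_t^{(x) k_jt}, k_jj = k-1 *)
Definition owner (k j p : nat) : nat := if (p < j * k)%N then (p %/ k)%N else (p.+1 %/ k)%N.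

(* |Psi^j> in H^{(x)(nk-1)} (j 0-based) *)
Definition PsiJ (d n k : nat) (psi : 'I_n -> ket ('I_d)) (j : 'I_n)
  : ket (tens d (n * k - 1)) :=
  fun f => \prod_(p < n * k - 1) psi_at psi (owner k j p) (f p).

Definition input_ket (d n k : nat) (mu : ket ('I_n))
  (psi : 'I_n -> ket ('I_d)) : ket (prod 'I_n (tens d (n * k))) :=
  fun x => mu x.1 * \prod_(p < n * k) psi_at psi (p %/ k) (x.2 p).

End QDefs.

From HB Require Import structures.
From mathcomp Require Import all_boot all_order all_algebra.
From mathcomp Require Import fingroup perm.
From mathcomp Require Import ring zify.
Import Order.TTheory GRing.Theory Num.Theory.
Local Open Scope ring_scope.
Set Implicit Arguments. Unset Strict Implicit.

(* The transformation is rho |-> eps K rho K^* for a single operator K, with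
   eps > 0 small enough to make it trace non-increasing.  Write s_j for the
   position of the first copy of psi_j in the input register.  K sends the
   basis vector |j>|f> to [f(s_j)] conj(X(g)) / sqrt(c_j), where g lists the
   remaining nk-1 slots of f in the order prescribed by tau_j.  On the input
   mu (x) (x)_i psi_i^{(x)k}, the j-th branch thus contracts every copy but
   one against <X|S_tau_j, leaving
   mu_j <X|S_tau_j|Psi^j> / sqrt(c_j) |psi_j> = mu_j e^{i theta_j} |psi_j>;
   so K maps the input to chi, and the output is eps |chi|^2 rho_phi. *)

Section QuadraticForm.
Variables (C : numClosedFieldType) (I : finType) (A : op C I).

Definition qform (v : ket C I) : C := \sum_i \sum_j (v i)^* * A i j * v j.

Lemma eq_qform u v : u =1 v -> qform u = qform v.
Proof.
by move=> uv; apply: eq_bigr => i _; apply: eq_bigr => j _; rewrite !uv.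
Qed.

Lemma qform_parallelogram u v :
  qform (fun i => u i + v i) + qform (fun i => u i - v i) =
  2 * qform u + 2 * qform v.
Proof.
rewrite /qform !mulr_sumr -!big_split /=; apply: eq_bigr => i _.
rewrite !mulr_sumr -!big_split /=; apply: eq_bigr => j _.
rewrite !rmorphD !rmorphN /=; ring.
Qed.

Lemma qform_delta (i0 : I) (w : C) :
  qform (fun i => if i == i0 then w else 0) = `|w| ^+ 2 * A i0 i0.
Proof.
rewrite /qform (bigD1 i0) //= [X in _ + X]big1 => [|i ni0]; last first.
  by apply: big1 => j _; rewrite (negbTE ni0) conjC0 !mul0r.
rewrite addr0 (bigD1 i0) //= [X in _ + X]big1 => [|j nj0].
  by rewrite eqxx addr0 normCK; ring.
by rewrite (negbTE nj0) mulr0.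
Qed.

Hypothesis psdA : psd A.

Lemma psd_diag_ge0 i : 0 <= A i i.
Proof.
have := psdA (fun j => if j == i then 1 else 0).
by rewrite -/(qform _) qform_delta normr1 expr1n mul1r.
Qed.

Lemma qformD_le u v :
  qform (fun i => u i + v i) <= 2 * qform u + 2 * qform v.
Proof. by rewrite -qform_parallelogram lerDl; apply: psdA. Qed.

Definition restrict (w : ket C I) (r : seq I) : ket C I :=
  fun i => if i \in r then w i else 0.

Lemma qform_restrict_le w r : uniq r ->
  qform (restrict w r) <= 2 ^+ size r * \sum_(i <- r) `|w i| ^+ 2 * A i i.
Proof.
elim: r => [_ | i r IHr] /=.
  rewrite big_nil mulr0 /qform big1 // => i _.
  by apply: big1 => j _; rewrite /restrict in_nil conjC0 !mul0r.
case/andP=> ri ur.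
have -> : qform (restrict w (i :: r)) =
          qform (fun j => (if j == i then w i else 0) + restrict w r j).
  apply: eq_qform => j; rewrite /restrict in_cons.
  by case: eqP => [-> | _] /=; rewrite ?(negbTE ri) ?addr0 ?add0r.
apply: le_trans (qformD_le _ _) _.
rewrite qform_delta big_cons [2 ^+ _.+1]exprS -mulrA !mulrDr.
have ge1 : 1 <= 2 ^+ size r :> C by rewrite exprn_ege1 // ler1n.
apply: lerD; rewrite ler_pM2l ?ltr0Sn //; last exact: IHr.
by rewrite ler_peMl // mulr_ge0 ?exprn_ge0 ?psd_diag_ge0.
Qed.

(* Much cruder than [qform w <= |w|^2 * trace A], but it suffices to bound the
   trace of [kraus] below. *)
Lemma qform_le_diag w :
  qform w <= 2 ^+ #|I| * \sum_i `|w i| ^+ 2 * A i i.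
Proof.
have -> : qform w = qform (restrict w (enum I)).
  by apply: eq_qform => i; rewrite /restrict mem_enum.
by rewrite cardE -big_enum /=; apply/qform_restrict_le/enum_uniq.
Qed.

Lemma psd_congruence (J : finType) (L : J -> I -> C) :
  psd (fun y z => \sum_a \sum_b L y a * A a b * (L z b)^*).
Proof.
move=> v.
suff -> : \sum_y \sum_z (v y)^* * (\sum_a \sum_b L y a * A a b * (L z b)^*) * v z
          = qform (fun b => \sum_z (L z b)^* * v z) by apply: psdA.
rewrite /qform; transitivity (\sum_y \sum_z \sum_a \sum_b
                (v y)^* * (L y a * A a b * (L z b)^*) * v z).
  apply: eq_bigr => y _; apply: eq_bigr => z _.
  rewrite mulr_sumr mulr_suml; apply: eq_bigr => a _.
  by rewrite mulr_sumr mulr_suml.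
have exchange3 (T1 T2 T3 : finType) (G : T1 -> T2 -> T3 -> C) :
    \sum_x \sum_y \sum_z G x y z = \sum_y \sum_z \sum_x G x y z.
  by rewrite exchange_big; apply: eq_bigr => y _; rewrite exchange_big.
under eq_bigr do rewrite exchange3.
rewrite exchange3; apply: eq_bigr => a _; apply: eq_bigr => b _.
rewrite rmorph_sum /= mulr_suml mulr_suml.
apply: eq_bigr => y _; rewrite mulr_sumr; apply: eq_bigr => z _.
by rewrite rmorphM /= conjCK; ring.
Qed.
End QuadraticForm.

Lemma psd_scale (C : numClosedFieldType) (T : finType) (eps : C) (B : op C T) :
  0 <= eps -> psd B -> psd (fun x y => eps * B x y).
Proof.
move=> eps_ge0 psdB v.
have -> : \sum_i \sum_j (v i)^* * (eps * B i j) * v j =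
          eps * \sum_i \sum_j (v i)^* * B i j * v j.
  rewrite mulr_sumr; apply: eq_bigr => i _; rewrite mulr_sumr.
  by apply: eq_bigr => j _; ring.
exact: mulr_ge0.
Qed.

Lemma eq_psd (C : numClosedFieldType) (T : finType) (B B' : op C T) :
  (forall x y, B x y = B' x y) -> psd B -> psd B'.
Proof.
move=> eqB psdB v; have := psdB v.
by under eq_bigr do under eq_bigr do rewrite eqB.
Qed.

Lemma ler_sum_term (R : numDomainType) (T : finType) (F : T -> R) i :
  (forall j, 0 <= F j) -> F i <= \sum_j F j.
Proof. by move=> F_ge0; rewrite (bigD1 i) //= lerDl sumr_ge0. Qed.

Section KrausChannel.
Variables (C : numClosedFieldType) (I J : finType).

Definition kraus (eps : C) (K : J -> I -> C) (A : op C I) : op C J :=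
  fun x y => eps * \sum_a \sum_b K x a * A a b * (K y b)^*.

Lemma kraus_linear eps K : linear_map (kraus eps K).
Proof.
move=> a A B x y; rewrite /kraus !mulr_sumr -big_split /=.
apply: eq_bigr => i _; rewrite !mulr_sumr -big_split /=.
by apply: eq_bigr => j _; ring.
Qed.

Lemma sum_pair_delta (m : nat) (b0 : 'I_m) (G : I * 'I_m -> C) :
  (forall a b, b != b0 -> G (a, b) = 0) -> \sum_q G q = \sum_a G (a, b0).
Proof.
move=> G0; rewrite (eq_bigr (fun q => G (q.1, q.2))) => [|[]//].
rewrite -(pair_bigA _ (fun a b => G (a, b))) /=; apply: eq_bigr => a _.
by rewrite (bigD1 b0) //= big1 ?addr0 // => b; apply: G0.
Qed.

Lemma kraus_cp eps K : 0 <= eps -> completely_positive (kraus eps K).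
Proof.
move=> eps_ge0 m A psdA.
pose L (x : J * 'I_m) (q : I * 'I_m) := if q.2 == x.2 then K x.1 q.1 else 0.
apply: eq_psd (psd_scale eps_ge0 (psd_congruence psdA L)) => x y.
rewrite /ampl /kraus; congr (_ * _); symmetry.
rewrite (sum_pair_delta (b0 := x.2)) => [|a b nb]; last first.
  by rewrite big1 // => q _; rewrite /L (negbTE nb) !mul0r.
apply: eq_bigr => a _; rewrite (sum_pair_delta (b0 := y.2)) => [|b b' nb'].
  by apply: eq_bigr => b _; rewrite /L !eqxx.
by rewrite /L (negbTE nb') conjC0 mulr0.
Qed.

Definition kraus_weight (K : J -> I -> C) : C :=
  2 ^+ #|I| * \sum_i \sum_x `|K x i| ^+ 2.

Definition kraus_eps (K : J -> I -> C) : C := (1 + kraus_weight K)^-1.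

Lemma kraus_weight_ge0 K : 0 <= kraus_weight K.
Proof.
rewrite mulr_ge0 ?exprn_ge0 // sumr_ge0 // => i _.
by rewrite sumr_ge0 // => x _; rewrite exprn_ge0.
Qed.

Lemma kraus_eps_gt0 K : 0 < kraus_eps K.
Proof. by rewrite invr_gt0 ltr_wpDr ?kraus_weight_ge0. Qed.

Lemma trace_kraus eps K A :
  trace (kraus eps K A) = eps * \sum_x qform A (fun b => (K x b)^*).
Proof.
rewrite /trace /kraus -mulr_sumr; congr (_ * _).
by apply: eq_bigr => x _; apply: eq_bigr => a _; apply: eq_bigr => b _; rewrite conjCK.
Qed.

Lemma kraus_tni K : trace_non_increasing (kraus (kraus_eps K) K).
Proof.
move=> A psdA; rewrite trace_kraus.
pose w i := \sum_x `|K x i| ^+ 2.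
have w_ge0 i : 0 <= w i by rewrite sumr_ge0 // => x _; rewrite exprn_ge0.
have eps_ge0 := ltW (kraus_eps_gt0 K).
have bound_rows : \sum_x qform A (fun b => (K x b)^*) <=
                  \sum_i 2 ^+ #|I| * w i * A i i.
  apply: le_trans (ler_sum _ (fun x _ => qform_le_diag psdA _)) _.
  rewrite -mulr_sumr exchange_big mulr_sumr /=; apply/ler_sum => i _.
  by rewrite /w -mulrA mulr_suml; under eq_bigr do rewrite norm_conjC.
apply: le_trans (ler_wpM2l eps_ge0 bound_rows) _.
rewrite mulr_sumr; apply: ler_sum => i _.
rewrite mulrA ler_piMl ?psd_diag_ge0 //.
have : 2 ^+ #|I| * w i <= kraus_weight K.
  by rewrite ler_wpM2l ?exprn_ge0 // (ler_sum_term (F := w)).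
move=> /(ler_wpM2l eps_ge0) /le_trans; apply.
rewrite /kraus_eps ler_pdivrMl ?ltr_wpDr ?kraus_weight_ge0 //.
by rewrite mulr1 lerDr.
Qed.

Lemma kraus_rho eps K (v : ket C I) x y :
  kraus eps K (rho v) x y = eps * rho (fun x => \sum_a K x a * v a) x y.
Proof.
rewrite /kraus /rho rmorph_sum mulr_suml; congr (_ * _).
apply: eq_bigr => a _; rewrite mulr_sumr; apply: eq_bigr => b _.
by rewrite rmorphM; ring.
Qed.

Lemma kraus_prob_qtrans K : prob_qtrans (kraus (kraus_eps K) K).
Proof. by split; [apply: kraus_linear | apply/kraus_cp/ltW/kraus_eps_gt0 | apply: kraus_tni]. Qed.
End KrausChannel.

Lemma normsq_gt0 (C : numClosedFieldType) (I : finType) (v : ket C I) :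
  (exists i, v i != 0) -> 0 < normsq v.
Proof.
case=> i vi; rewrite /normsq (bigD1 i) //= ltr_wpDr ?exprn_gt0 ?normr_gt0 //.
by rewrite sumr_ge0 // => j _; rewrite exprn_ge0.
Qed.

Lemma rho_normalize (C : numClosedFieldType) (I : finType) (v : ket C I) x y :
  0 < normsq v -> rho v x y = normsq v * rho (normalize v) x y.
Proof.
move=> v_gt0; rewrite /rho /normalize.
have s_neq0 : sqrtC (normsq v) != 0 by rewrite sqrtC_eq0 gt_eqF.
have s_real : (sqrtC (normsq v))^* = sqrtC (normsq v).
  by rewrite geC0_conj // sqrtC_ge0 ltW.
rewrite rmorphM /= fmorphV /= s_real -{1}[normsq v]sqrtCK; field.
exact: s_neq0.
Qed.

Section Contraction.
Variables n k : nat.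
Hypotheses (n_ge2 : (2 <= n)%N) (k_gt0 : (0 < k)%N).

Lemma slot_lt (j : 'I_n) : (j * k < n * k)%N.
Proof. by rewrite ltn_pmul2r. Qed.

(* Position of the first copy of psi_j in the input register; it is the copy
   missing from Psi^j. *)
Definition slot (j : 'I_n) : 'I_(n * k) := Ordinal (slot_lt j).

Lemma slot_divn j : (slot j %/ k)%N = j.
Proof. by rewrite /= mulnK. Qed.

Lemma skip_lt (j : 'I_n) (p : 'I_(n * k - 1)) : (bump (j * k) p < n * k)%N.
Proof. by rewrite /bump; case: leqP => /=; have := ltn_ord p; lia. Qed.

Definition skip (j : 'I_n) (p : 'I_(n * k - 1)) : 'I_(n * k) := Ordinal (skip_lt j p).

Lemma nk1_gt0 : (0 < n * k - 1)%N.
Proof. have : (2 * 1 <= n * k)%N by rewrite leq_mul. lia. Qed.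

Definition unskip (j : 'I_n) (q : 'I_(n * k)) : 'I_(n * k - 1) :=
  insubd (Ordinal nk1_gt0) (unbump (j * k) q).

Lemma skip_neq_slot j p : skip j p != slot j.
Proof. by rewrite -val_eqE /= eq_sym neq_bump. Qed.

Lemma skipK j : cancel (skip j) (unskip j).
Proof. by move=> p; apply: val_inj; rewrite /unskip val_insubd /= bumpK ltn_ord. Qed.

Lemma unskipK j q : q != slot j -> skip j (unskip j q) = q.
Proof.
rewrite -val_eqE /= => q_neq; apply: val_inj => /=.
rewrite val_insubd.
have : (unbump (j * k) q < n * k - 1)%N.
  by rewrite /unbump; move: q_neq (ltn_ord q) (slot_lt j); case: ltnP => /=; lia.
by move=> ->; rewrite unbumpKcond (negbTE q_neq).
Qed.

Lemma owner_skip (j : 'I_n) (p : 'I_(n * k - 1)) : owner k j p = (skip j p %/ k)%N.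
Proof. by rewrite /owner /= /bump; case: (ltnP p (j * k)); rewrite ?add0n ?add1n. Qed.

Variables (C : numClosedFieldType) (d : nat) (X : ket C (tens d (n * k - 1))).
Variables (tau : 'I_n -> {perm 'I_(n * k - 1)}) (c : 'I_n -> C).

Definition rest (j : 'I_n) (f : tens d (n * k)) : tens d (n * k - 1) :=
  [ffun q => f (skip j ((tau j)^-1 q))%g].

Definition extend (j : 'I_n) (x : 'I_d) (h : tens d (n * k - 1)) : tens d (n * k) :=
  [ffun p => if p == slot j then x else h (tau j (unskip j p))].

Lemma extend_slot j x h : extend j x h (slot j) = x.
Proof. by rewrite ffunE eqxx. Qed.

Lemma rest_extend j x : cancel (extend j x) (rest j).
Proof. by move=> h; apply/ffunP => q; rewrite !ffunE (negbTE (skip_neq_slot _ _)) skipK permKV. Qed.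

Lemma extend_rest j x (f : tens d (n * k)) : f (slot j) == x -> extend j x (rest j f) = f.
Proof.
move=> /eqP fx; apply/ffunP => p; rewrite !ffunE.
by case: eqP => [-> // | /eqP p_neq]; rewrite permK unskipK.
Qed.

Variable psi : 'I_n -> ket C ('I_d).

Lemma psi_at_ord (j : 'I_n) : psi_at psi j = psi j.
Proof. by rewrite /psi_at valK. Qed.

(* Fixing the slot of the missing copy of psi_j, the other nk-1 copies are
   exactly Psi^j, up to the permutation tau_j. *)
Lemma contract_copies j x :
  \sum_(f : tens d (n * k) | f (slot j) == x)
     (X (rest j f))^* * \prod_(p < n * k) psi_at psi (p %/ k) (f p) =
  psi j x * braket X (Sperm (tau j) (PsiJ psi j)).
Proof.
rewrite (reindex_onto (extend j x) (rest j)) /=; last exact: extend_rest.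
rewrite /braket mulr_sumr; apply: eq_big => [h | h _].
  by rewrite extend_slot eqxx rest_extend eqxx.
rewrite rest_extend mulrCA; congr (_ * _).
rewrite (bigD1 (slot j)) //= extend_slot slot_divn psi_at_ord; congr (_ * _).
rewrite (reindex_onto (skip j) (unskip j)) /=; last exact: unskipK.
apply: eq_big => [p | p _]; first by rewrite skip_neq_slot skipK eqxx.
by rewrite !ffunE (negbTE (skip_neq_slot j p)) skipK owner_skip.
Qed.

Definition contraction (x : 'I_d) (a : 'I_n * tens d (n * k)) : C :=
  if a.2 (slot a.1) == x then (X (rest a.1 a.2))^* / sqrtC (c a.1) else 0.

Lemma contraction_input (mu : ket C 'I_n) x :
  \sum_a contraction x a * input_ket mu psi a =
  \sum_j mu j / sqrtC (c j) * (psi j x * braket X (Sperm (tau j) (PsiJ psi j))).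
Proof.
rewrite (eq_bigr (fun a => contraction x (a.1, a.2) * input_ket mu psi (a.1, a.2))) => [|[]//].
rewrite -(pair_bigA _ (fun j f => contraction x (j, f) * input_ket mu psi (j, f))) /=.
apply: eq_bigr => j _; rewrite -contract_copies mulr_sumr [RHS]big_mkcond /=.
by apply: eq_bigr => f _; rewrite /contraction /input_ket /=; case: ifP => _; ring.
Qed.
End Contraction.

Theorem corollary4 (C : numClosedFieldType) (d n k : nat)
  (hd : (2 <= d)%N) (hn : (2 <= n)%N) (hk : (1 <= k)%N)
  (X : ket C (tens d (n * k - 1))) (hX : unit_vec X)
  (tau : 'I_n -> {perm 'I_(n * k - 1)})
  (c : 'I_n -> C) (hc : forall j, 0 < c j) :
  exists F : op C (prod 'I_n (tens d (n * k))) -> op C ('I_d),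
    prob_qtrans F /\
    forall (mu : ket C ('I_n)) (psi : 'I_n -> ket C ('I_d)),
      unit_vec mu ->
      (forall t, unit_vec (psi t)) ->
      (forall j, `|braket X (Sperm (tau j) (PsiJ psi j))| ^+ 2 = c j) ->
      let amp j := braket X (Sperm (tau j) (PsiJ psi j)) in
      let chi : ket C ('I_d) :=
        fun a => \sum_(j < n) mu j * (amp j / `|amp j|) * psi j a in
      (exists a, chi a != 0) ->
      exists p : C, 0 < p /\
        forall x y, F (rho (@input_ket C d n k mu psi)) x y = p * rho (normalize chi) x y.
Proof.
pose K := contraction hn hk X tau c.
exists (kraus (kraus_eps K) K); split; first exact: kraus_prob_qtrans.
move=> mu psi _ _ amp_sq amp chi chi_neq0.
have amp_norm j : `|amp j| = sqrtC (c j) by rewrite -amp_sq sqrCK.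
have K_input x : \sum_a K x a * input_ket mu psi a = chi x.
  rewrite contraction_input; apply: eq_bigr => j _; by rewrite amp_norm /amp; ring.
have chi_gt0 := normsq_gt0 chi_neq0.
exists (kraus_eps K * normsq chi); split; first by rewrite mulr_gt0 ?kraus_eps_gt0.
move=> x y; rewrite kraus_rho -mulrA -rho_normalize //.
by rewrite /rho !K_input.
Qed.
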